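(* For integers $n\ge0$ and $0\le i\le n/2$ let $g(i,n)=\binom{2(n-i)}{n-i}^2\binom{n-i}{i}$. Let $p$ be an odd prime, $m,r$ positive integers, and $j$ an integer with $0\le j\le mp^{r-1}/2$. Then $$(-4)^{jp}g(jp,mp^r)\equiv(-4)^jg(j,mp^{r-1})\pmod{p^r}.$$ *)

From mathcomp Require Import all_boot all_algebra.
Set Implicit Arguments. Unset Strict Implicit. Unset Printing Implicit Defensive.
Import GRing.Theory Num.Theory.

Definition g (i n : nat) : nat := 'C((n - i).*2, n - i) ^ 2 * 'C(n - i, i).

(* Put k = n - i.  The identity C(2k,k) C(k,i) = C(2k,k-i) C(n,i) rewrites
   g(i,n) as C(2k,k) C(2k,n-2i) C(n,i); for (jp, mp^r) every binomial becomes
   C(pa,pb) with (a,b) the matching pair for (j, mp^(r-1)).  Let N = mp^(r-1)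
   and p^t the largest power of p dividing j, capped at p^(r-1).  Since
   (1+X)^p = 1+X^p mod p, raising to p^t-th powers gives C(pa,pb) = C(a,b)
   mod p^(t+1) whenever p^t | a; likewise (-4)^(pj) = (-4)^j mod p^(t+1) by
   Fermat.  This handles the first three factors modulo p^(t+1); the last one
   satisfies C(pN,pj) = C(N,j) mod p^r and is divisible by p^(r-1-t), so the
   product congruence holds modulo p^(t+1) p^(r-1-t) = p^r. *)

From mathcomp Require Import all_boot all_algebra.
From mathcomp Require Import ring zify.
Set Implicit Arguments. Unset Strict Implicit. Unset Printing Implicit Defensive.
Import GRing.Theory Num.Theory.
Local Open Scope ring_scope.

Definition eqmodr {R : comPzRingType} (c x y : R) := exists z, x = y + c * z.

Lemma eqmodr_modz (d x y : int) : eqmodr d x y -> (x = y %[mod d])%Z.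
Proof. by move=> [z ->]; rewrite addrC mulrC modzMDl. Qed.

Section Congruence.
Variable R : comPzRingType.
Implicit Types c x y : R.

Lemma eqmodrM c x y x' y' :
  eqmodr c x y -> eqmodr c x' y' -> eqmodr c (x * x') (y * y').
Proof.
move=> [z ->] [z' ->]; exists (z * y' + y * z' + c * z * z'); ring.
Qed.

Lemma eqmodrX c x y n : eqmodr c x y -> eqmodr c (x ^+ n) (y ^+ n).
Proof.
move=> xy; elim: n => [|n IHn]; first by exists 0; rewrite !expr0; ring.
by rewrite !exprS; apply: eqmodrM.
Qed.

Lemma eqmodrM_dvd c s x y a b :
  eqmodr c x y -> eqmodr (c * s) a b -> (exists a', a = s * a') ->
  eqmodr (c * s) (x * a) (y * b).
Proof.
move=> [z ->] [w ab] [a' a_s]; exists (z * a' + y * w).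
by rewrite mulrDl {1}ab a_s; ring.
Qed.

Lemma eqmodr_expD_prime p x y : prime p ->
  eqmodr p%:R ((x + y) ^+ p) (x ^+ p + y ^+ p).
Proof.
move=> pp; exists (\sum_(i < p.+1 | (i != ord_max) && (i != ord0))
  (x ^+ (p - i) * y ^+ i) *+ ('C(p, i) %/ p)).
rewrite exprDn (bigD1 ord_max) // (bigD1 ord0) //=.
rewrite (subnn p) subn0 bin0 binn expr0 mulr1 mul1r !mulr1n addrCA addrA.
congr (_ + _); rewrite mulr_sumr; apply: eq_bigr => i /andP[ip i0].
rewrite mulr_natl -mulrnA divnK // prime_dvd_bin // lt0n i0 /=.
by rewrite ltn_neqAle -ltnS ltn_ord andbT; apply: contra ip => /eqP ip; apply/eqP/val_inj.
by rewrite -val_eqE /= eq_sym -lt0n prime_gt0.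
Qed.

Lemma eqmodrN c x y : eqmodr c x y -> eqmodr c (- x) (- y).
Proof. by move=> [z ->]; exists (- z); ring. Qed.

Lemma eqmodr_fermat p n : prime p -> eqmodr (p%:R : R) (n%:R ^+ p) n%:R.
Proof.
move=> pp; elim: n => [|n [z IHn]].
  by exists 0; rewrite expr0n gtn_eqF ?prime_gt0 // mulr0 addr0.
rewrite -natr1; have [w ->] := eqmodr_expD_prime (n%:R : R) 1 pp.
by exists (z + w); rewrite expr1n IHn; ring.
Qed.

Lemma eqmodr_exprD_sq q y d n :
  eqmodr (q ^+ 2) ((y + q * d) ^+ n.+1) (y ^+ n.+1 + n.+1%:R * y ^+ n * (q * d)).
Proof.
elim: n => [|n [w IHn]]; first by exists 0; rewrite !expr1 expr0; ring.
exists (n.+1%:R * y ^+ n * d ^+ 2 + w * y + w * q * d).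
by rewrite exprSr IHn [n.+2%:R]mulrSr !exprS; ring.
Qed.

Lemma eqmodr_prime_expS p e x y : (0 < p)%N ->
  eqmodr (p ^ e.+1)%:R x y -> eqmodr (p ^ e.+2)%:R (x ^+ p) (y ^+ p).
Proof.
rewrite !natrX => p_gt0 [d ->]; have [w] := eqmodr_exprD_sq (p%:R ^+ e.+1) y d p.-1.
rewrite prednK // => ->; exists (y ^+ p.-1 * d + p%:R ^+ e * w).
have -> : (p%:R ^+ e.+1) ^+ 2 = p%:R ^+ e.+2 * p%:R ^+ e :> R.
  by rewrite -exprM -exprD addSnnS addnn -muln2.
rewrite [p%:R ^+ e.+2]exprS; ring.
Qed.

Lemma eqmodr_prime_dvdn_exp p t n x y : (0 < p)%N -> (p ^ t %| n)%N ->
  eqmodr p%:R x y -> eqmodr (p ^ t.+1)%:R (x ^+ n) (y ^+ n).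
Proof.
move=> p_gt0 /dvdnP[u ->] xy; rewrite mulnC.
elim: t => [|t IHt]; first by rewrite mul1n expn1; apply: eqmodrX.
by rewrite (expnSr p t) mulnAC (exprM x) (exprM y); apply: eqmodr_prime_expS.
Qed.
End Congruence.

Lemma coef_exp1DX (R : nzRingType) n i : ((1 + 'X : {poly R}) ^+ n)`_i = 'C(n, i)%:R.
Proof.
elim: n i => [|n IHn] [|i]; rewrite ?expr0 ?coef1 // exprSr mulrDr mulr1 coefD coefMX.
  by rewrite IHn /= !bin0 addr0.
by rewrite !IHn binS natrD addrC.
Qed.

Lemma eqmodr_coef (R : comNzRingType) (n : nat) (P Q : {poly R}) i :
  eqmodr n%:R P Q -> eqmodr n%:R P`_i Q`_i.
Proof. by move=> [W ->]; exists W`_i; rewrite coefD !mulr_natl coefMn. Qed.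

Lemma eqmodr_bin_mul p t a b : prime p -> (p ^ t %| a)%N ->
  eqmodr ((p ^ t.+1)%:R : int) 'C(p * a, p * b)%:R 'C(a, b)%:R.
Proof.
move=> pp pta; have p_gt0 := prime_gt0 pp.
have frob : eqmodr (p%:R : {poly int}) ((1 + 'X) ^+ p) ((1 + 'X) \Po 'X^p).
  have := eqmodr_expD_prime (1 : {poly int}) 'X pp.
  by rewrite expr1n comp_polyD comp_polyX rmorph1.
have /(eqmodr_coef (p * b)) := eqmodr_prime_dvdn_exp p_gt0 pta frob.
by rewrite -exprM -rmorphXn coef_comp_poly_Xn // dvdn_mulr // mulKn // !coef_exp1DX.
Qed.

Lemma pfactor_dvdn_bin p e M i : prime p -> (0 < i)%N -> (p ^ e %| M)%N ->
  (p ^ (e - logn p i) %| 'C(M, i))%N.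
Proof.
move=> pp i_gt0 peM; have [le_ie|lt_ei] := leqP (logn p i) e; last first.
  by rewrite (eqP (ltnW lt_ei)) dvd1n.
have [u cop_u Ei] := pfactor_coprime pp i_gt0.
have : (p ^ e %| i * 'C(M, i))%N by rewrite -(prednK i_gt0) -mul_bin_diag dvdn_mulr.
rewrite {1}Ei -{1}(subnK le_ie) expnD mulnAC dvdn_pmul2r ?expn_gt0 ?prime_gt0 //.
by rewrite Gauss_dvdr // coprimeXl.
Qed.

Lemma pfactor_split_bin p e N j : prime p -> (p ^ e %| N)%N ->
  exists t, [/\ (t <= e)%N, (p ^ t %| j)%N & (p ^ (e - t) %| 'C(p * N, p * j))%N].
Proof.
move=> pp peN; have [->|j_gt0] := posnP j; first by exists e; rewrite subnn dvdn0.
exists (minn (logn p j) e); split; first exact: geq_minr.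
  exact: dvdn_trans (dvdn_exp2l p (geq_minl _ _)) (pfactor_dvdnn p j).
have := @pfactor_dvdn_bin p e.+1 (p * N) (p * j) pp.
rewrite muln_gt0 prime_gt0 // j_gt0 (lognM _ (prime_gt0 pp) j_gt0) logn_prime // eqxx.
rewrite expnS dvdn_pmul2l ?prime_gt0 // subSS => /(_ isT peN).
by case: leqP => // _ _; rewrite subnn dvd1n.
Qed.

Lemma mul_bin_bin n k i : (i <= k <= n)%N ->
  ('C(n, k) * 'C(k, i) = 'C(n, i) * 'C(n - i, k - i))%N.
Proof.
move=> /andP[le_ik le_kn]; have le_in := leq_trans le_ik le_kn.
apply/eqP; rewrite -(@eqn_pmul2r (i`! * (k - i)`! * (n - k)`!)) ?muln_gt0 ?fact_gt0 //.
have Enk := bin_fact le_kn; have Eki := bin_fact le_ik; have Eni := bin_fact le_in.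
have Enki := bin_fact (leq_sub2r i le_kn).
rewrite subnBA // subnK // in Enki.
apply/eqP; transitivity n`!.
  by rewrite -Enk -Eki; ring.
by rewrite -Eni -Enki; ring.
Qed.

Lemma gE i n : (i.*2 <= n)%N ->
  g i n = ('C((n - i).*2, n - i) * 'C((n - i).*2, n - i.*2) * 'C(n, i))%N.
Proof.
move=> le_2in; have le_i_ni : (i <= n - i)%N by lia.
rewrite /g -mulnn -mulnA -(bin_sub le_i_ni) mul_bin_bin; last by apply/andP; split; lia.
by rewrite mulnA; congr (_ * 'C(_, _) * 'C(_, _))%N; lia.
Qed.

Theorem mainTheorem16 (p m r j : nat) :
  prime p -> odd p -> (0 < m)%N -> (0 < r)%N ->
  (j.*2 <= m * p ^ r.-1)%N ->
  (((-4 : int) ^+ (j * p) * (g (j * p) (m * p ^ r))%:Z)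
     = ((-4 : int) ^+ j * (g j (m * p ^ r.-1))%:Z) %[mod (p ^ r)%:Z])%Z.
Proof.
move=> pp odd_p _; case: r => // r _ /=; set N := (m * p ^ r)%N => le_2jN.
have peN : (p ^ r %| N)%N by apply: dvdn_mull.
have [t [le_tr ptj ptC]] := pfactor_split_bin j pp peN.
have pt2k : (p ^ t %| (N - j).*2)%N.
  by rewrite -muln2 dvdn_mulr // dvdn_sub // (dvdn_trans (dvdn_exp2l p le_tr)).
have le_2pj_pN : ((p * j).*2 <= p * N)%N by rewrite doubleMr leq_mul2l le_2jN orbT.
rewrite [in (m * _)%N]expnS mulnCA -/N (mulnC j) !gE // -mulnBr !doubleMr -mulnBr.
have Er : (p ^ r.+1 = p ^ t.+1 * p ^ (r - t))%N by rewrite -expnD addSn subnKC.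
apply: eqmodr_modz; rewrite -!natz !natrM !mulrA Er natrM.
apply: eqmodrM_dvd; last 2 first.
- by rewrite -natrM -Er; apply: eqmodr_bin_mul.
- by have [w ->] := dvdnP ptC; exists w%:R; rewrite natrM mulrC.
have fermat4 : eqmodr p%:R ((-4 : int) ^+ p) (-4).
  by rewrite exprNn -signr_odd odd_p expr1 mulN1r; apply/eqmodrN/eqmodr_fermat.
rewrite exprM; apply: eqmodrM; last exact: eqmodr_bin_mul.
apply: eqmodrM; last exact: eqmodr_bin_mul.
exact: (eqmodr_prime_dvdn_exp (prime_gt0 pp) ptj fermat4).
Qed.
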